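(* Let $h_6$ be the real two-photon Lie algebra. A Lie bialgebra structure $\delta$ on $h_6$ satisfies $\delta(A_+)=0$ if and only if there exist real numbers $a_1,a_3,a_4,a_5,b_3,c_1$ with $$a_1a_4+a_5c_1=0$$ such that $\delta(X)=[1\otimes X+X\otimes 1,\,r]$ for all $X\in h_6$, where $$r=a_1\,N\wedge A_++a_3\,A_+\wedge M+a_4\,B_+\wedge M+a_5\,A_+\wedge B_++b_3\,A_-\wedge M+c_1\,(N\wedge M-A_+\wedge A_-).$$ Explicitly, $\delta(A_+)=\delta(M)=0$ and $\delta(N)=a_1N\wedge A_++a_3A_+\wedge M+2a_4B_+\wedge M+3a_5A_+\wedge B_+-b_3A_-\wedge M$, $\delta(A_-)=a_1(N\wedge M-A_+\wedge A_-)+2a_4A_+\wedge M-a_5B_+\wedge M+2c_1A_-\wedge M$, $\delta(B_+)=2a_1A_+\wedge B_+-2b_3A_+\wedge M-2c_1B_+\wedge M$, $\delta(B_-)=2a_1(N\wedge A_--A_+\wedge B_-)+2a_3A_-\wedge M+4a_4N\wedge M-2a_5(2N\wedge A_+-A_-\wedge B_+-A_+\wedge M)+2c_1B_-\wedge M$. Moreover, $r$ satisfies the classical Yang–Baxter equation $[[r,r]]=0$ (non-standard case) if and only if $a_1b_3-c_1^2=0$, and otherwise it is standard.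
   Context: The two-photon Lie algebra $h_6$ is the real Lie algebra with basis $\{N,A_+,A_-,B_+,B_-,M\}$ and brackets $[N,A_+]=A_+$, $[N,A_-]=-A_-$, $[A_-,A_+]=M$, $[N,B_+]=2B_+$, $[N,B_-]=-2B_-$, $[B_-,B_+]=4N+2M$, $[A_+,B_-]=-2A_-$, $[A_+,B_+]=0$, $[A_-,B_+]=2A_+$, $[A_-,B_-]=0$, and $M$ central. A Lie bialgebra structure on a Lie algebra $g$ is a linear map $\delta:g\to g\otimes g$ which is a 1-cocycle, i.e. $\delta([X,Y])=[\delta(X),1\otimes Y+Y\otimes 1]+[1\otimes X+X\otimes 1,\delta(Y)]$, and whose dual map $g^*\otimes g^*\to g^*$ is a Lie bracket. For $r=\sum r^{ij}X_i\otimes X_j\in g\wedge g$, the Schouten bracket is $[[r,r]]=[r_{12},r_{13}]+[r_{12},r_{23}]+[r_{13},r_{23}]$ with $r_{12}=\sum r^{ij}X_i\otimes X_j\otimes 1$, $r_{13}=\sum r^{ij}X_i\otimes 1\otimes X_j$, $r_{23}=\sum r^{ij}1\otimes X_i\otimes X_j$. Here $X\wedge Y=X\otimes Y-Y\otimes X$. *)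

(* The real Lie algebra h6 is modelled on row vectors 'rV[R]_6
   over an arbitrary real field R (coordinates in the basis N,A+,A-,B+,B-,M),
   g (x) g as 6x6 matrices (entry (i,j) = coefficient of X_i (x) X_j),
   g (x) g (x) g as functions 'I_6 -> 'I_6 -> 'I_6 -> R. *)
From HB Require Import structures.
From mathcomp Require Import all_boot all_order all_algebra.
Set Implicit Arguments. Unset Strict Implicit. Unset Printing Implicit Defensive.
Import Order.TTheory GRing.Theory Num.Theory.
Local Open Scope ring_scope.

Section H6.
Variable R : realFieldType.

Definition g := 'rV[R]_6.
Definition gg := 'M[R]_6.

Definition iN  : 'I_6 := @Ordinal 6 0 isT.
Definition iAp : 'I_6 := @Ordinal 6 1 isT.
Definition iAm : 'I_6 := @Ordinal 6 2 isT.
Definition iBp : 'I_6 := @Ordinal 6 3 isT.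
Definition iBm : 'I_6 := @Ordinal 6 4 isT.
Definition iM  : 'I_6 := @Ordinal 6 5 isT.

Definition e (k : 'I_6) : g := delta_mx 0 k.
Definition N  := e iN.
Definition Ap := e iAp.
Definition Am := e iAm.
Definition Bp := e iBp.
Definition Bm := e iBm.
Definition M  := e iM.

Definition brb (i j : 'I_6) : g :=
  match nat_of_ord i, nat_of_ord j with
  | 0, 1 => Ap | 1, 0 => - Ap
  | 0, 2 => - Am | 2, 0 => Am
  | 2, 1 => M | 1, 2 => - M
  | 0, 3 => 2%:R *: Bp | 3, 0 => - (2%:R *: Bp)
  | 0, 4 => - (2%:R *: Bm) | 4, 0 => 2%:R *: Bm
  | 4, 3 => 4%:R *: N + 2%:R *: M | 3, 4 => - (4%:R *: N + 2%:R *: M)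
  | 1, 4 => - (2%:R *: Am) | 4, 1 => 2%:R *: Am
  | 2, 3 => 2%:R *: Ap | 3, 2 => - (2%:R *: Ap)
  | _, _ => 0
  end.

Definition c (i j k : 'I_6) : R := brb i j 0 k.

Definition bracket (x y : g) : g :=
  \sum_(i < 6) \sum_(j < 6) (x 0 i * y 0 j) *: brb i j.

Definition adm (x : g) (i k : 'I_6) : R := \sum_(m < 6) x 0 m * c m i k.

(* [1 (x) X + X (x) 1, t] = (ad_X (x) 1 + 1 (x) ad_X) t on g (x) g *)
Definition act2 (x : g) (t : gg) : gg :=
  \matrix_(a, b) (\sum_(i < 6) adm x i a * t i b + \sum_(j < 6) t a j * adm x j b).

Definition act3 (x : g) (T : 'I_6 -> 'I_6 -> 'I_6 -> R) : 'I_6 -> 'I_6 -> 'I_6 -> R :=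
  fun a b d => \sum_(i < 6) adm x i a * T i b d + \sum_(i < 6) adm x i b * T a i d
             + \sum_(i < 6) adm x i d * T a b i.

Definition wedge (u v : g) : gg := u^T *m v - v^T *m u.

Definition cocycle (delta : g -> gg) : Prop :=
  forall x y : g, delta (bracket x y) = act2 x (delta y) - act2 y (delta x).

(* dual map g* (x) g* -> g*, functionals encoded as coordinate row vectors
   in the dual basis: (dualbr f h)(X_i) = (f (x) h)(delta X_i) *)
Definition dualbr (delta : g -> gg) (f h : g) : g :=
  \row_i (\sum_(j < 6) \sum_(k < 6) f 0 j * h 0 k * delta (e i) j k).

(* the dual map is a Lie bracket (it is bilinear by construction) *)
Definition dual_is_Lie (delta : g -> gg) : Prop :=
  (forall f h : g, dualbr delta f h = - dualbr delta h f) /\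
  (forall f h k : g, dualbr delta (dualbr delta f h) k + dualbr delta (dualbr delta h k) f
                     + dualbr delta (dualbr delta k f) h = 0).

Definition lie_bialgebra (delta : {linear g -> gg}) : Prop :=
  cocycle delta /\ dual_is_Lie delta.

(* Schouten bracket [[r,r]] = [r12,r13] + [r12,r23] + [r13,r23] *)
Definition schouten (r : gg) : 'I_6 -> 'I_6 -> 'I_6 -> R :=
  fun a b d =>
    \sum_(i < 6) \sum_(k < 6) r i b * r k d * c i k a
  + \sum_(j < 6) \sum_(k < 6) r a j * r k d * c j k b
  + \sum_(j < 6) \sum_(l < 6) r a j * r b l * c j l d.

Definition cybe (r : gg) : Prop := forall a b d, schouten r a b d = 0.

Definition standard (r : gg) : Prop :=
  ~ cybe r /\ forall (x : g) a b d, act3 x (schouten r) a b d = 0.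

Definition rmat (a1 a3 a4 a5 b3 c1 : R) : gg :=
  a1 *: wedge N Ap + a3 *: wedge Ap M + a4 *: wedge Bp M + a5 *: wedge Ap Bp
  + b3 *: wedge Am M + c1 *: (wedge N M - wedge Ap Am).

End H6.

(* Coboundaries X |-> X.r are 1-cocycles because X |-> X. is a representation
   of h6 (Jacobi identity).  Conversely, let delta be a skew 1-cocycle with
   delta(A+) = 0, read a1, ..., c1 off six coefficients of delta(N) and
   delta(A-), and let D = delta - delta_r.  The cocycle identity at (N, A+)
   gives A+.D(N) = 0, which with one coefficient of the identity at (N, B+)
   and the normalisation forces D(N) = 0.  Since ad N is diagonal with
   weights 0, 1, -1, 2, -2, 0, the identity at (N, X) then says that D(X) has
   the weight of X, which leaves nine coefficients; the identities at
   (A+, A-), (A+, B+), (A+, B-) and (A-, B+) kill them.  The dual Jacobi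
   identity of delta_r reduces to a1 a4 + a5 c1 = 0, and the Schouten bracket
   of r is (a1 b3 - c1^2) A+/\A-/\M - 2 (a1 a4 + a5 c1) A+/\B+/\M, whose
   first term is ad-invariant. *)

From HB Require Import structures.
From mathcomp Require Import all_boot all_order all_algebra.
From mathcomp Require Import ring lra.
Import Order.TTheory GRing.Theory Num.Theory.
Local Open Scope ring_scope.
Set Implicit Arguments. Unset Strict Implicit. Unset Printing Implicit Defensive.

Section TwoPhoton.
Variable R : realFieldType.
Local Notation g := (g R).
Local Notation gg := (gg R).
Local Notation e := (e R).
Local Notation c := (c R).
Implicit Types (x y : g) (t r : gg).

Lemma big_ord6 (F : 'I_6 -> R) :
  \sum_(i < 6) F i = F iN + F iAp + F iAm + F iBp + F iBm + F iM.
Proof.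
rewrite !big_ord_recr big_ord0 /= add0r.
by congr (_ + _ + _ + _ + _ + _); apply: congr1; apply: val_inj.
Qed.

Lemma ord6_ind (P : 'I_6 -> Prop) :
  P iN -> P iAp -> P iAm -> P iBp -> P iBm -> P iM -> forall i, P i.
Proof.
move=> PN PAp PAm PBp PBm PM [[|[|[|[|[|[|n]]]]]] lti] //.
- by rewrite (_ : Ordinal lti = iN) //; apply: val_inj.
- by rewrite (_ : Ordinal lti = iAp) //; apply: val_inj.
- by rewrite (_ : Ordinal lti = iAm) //; apply: val_inj.
- by rewrite (_ : Ordinal lti = iBp) //; apply: val_inj.
- by rewrite (_ : Ordinal lti = iBm) //; apply: val_inj.
- by rewrite (_ : Ordinal lti = iM) //; apply: val_inj.
Qed.

(* Coefficient tables return [None] on structural zeros, so that [simpl]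
   discards vanishing products before [ring] or [lra] see them. *)
Definition oval (x : option R) : R := if x is Some a then a else 0.
Definition omul (x y : option R) : option R :=
  if (x, y) is (Some a, Some b) then Some (a * b) else None.
Definition oadd (x y : option R) : option R :=
  match x, y with
  | None, _ => y
  | Some a, None => Some a
  | Some a, Some b => Some (a + b)
  end.
Definition osum (F : 'I_6 -> option R) : option R :=
  oadd (F iN) (oadd (F iAp) (oadd (F iAm) (oadd (F iBp) (oadd (F iBm) (F iM))))).

Lemma omulE (x y : option R) : oval (omul x y) = oval x * oval y.
Proof. by case: x => [a|]; case: y => [b|] /=; rewrite ?mulr0 ?mul0r. Qed.

Lemma oaddE (x y : option R) : oval (oadd x y) = oval x + oval y.
Proof. by case: x => [a|]; case: y => [b|] /=; rewrite ?addr0 ?add0r. Qed.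

Lemma osumE F : oval (osum F) = \sum_(i < 6) oval (F i).
Proof. by rewrite big_ord6 /osum !oaddE !addrA. Qed.

Lemma osum_mulE (F G : 'I_6 -> option R) :
  oval (osum (fun j => omul (F j) (G j))) = \sum_(j < 6) oval (F j) * oval (G j).
Proof. by rewrite osumE; apply: eq_bigr => j _; rewrite omulE. Qed.

Lemma osum2E (F G H : 'I_6 -> 'I_6 -> option R) :
  oval (osum (fun i => osum (fun k => omul (omul (F i k) (G i k)) (H i k)))) =
  \sum_(i < 6) \sum_(k < 6) oval (F i k) * oval (G i k) * oval (H i k).
Proof.
rewrite osumE; apply: eq_bigr => i _; rewrite osumE; apply: eq_bigr => k _.
by rewrite !omulE.
Qed.

Definition ctab (i j k : nat) : option R :=
  match i, j, k with
  | 0, 1, 1 => Some 1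
  | 0, 2, 2 => Some (-1)
  | 0, 3, 3 => Some 2%:R
  | 0, 4, 4 => Some (-2%:R)
  | 1, 0, 1 => Some (-1)
  | 1, 2, 5 => Some (-1)
  | 1, 4, 2 => Some (-2%:R)
  | 2, 0, 2 => Some 1
  | 2, 1, 5 => Some 1
  | 2, 3, 1 => Some 2%:R
  | 3, 0, 3 => Some (-2%:R)
  | 3, 2, 1 => Some (-2%:R)
  | 3, 4, 0 => Some (-4%:R)
  | 3, 4, 5 => Some (-2%:R)
  | 4, 0, 4 => Some 2%:R
  | 4, 1, 2 => Some 2%:R
  | 4, 3, 0 => Some 4%:R
  | 4, 3, 5 => Some 2%:R
  | _, _, _ => None
  end.

Lemma cE i j k : c i j k = oval (ctab i j k).
Proof.
elim/ord6_ind: i; elim/ord6_ind: j; elim/ord6_ind: k.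
all: rewrite /c /brb /= ?mxE /=; ring.
Qed.

Lemma e_sum_mul k (F : 'I_6 -> R) : \sum_(l < 6) e k 0 l * F l = F k.
Proof.
rewrite (bigD1 k) //= big1 => [|l nlk]; rewrite mxE.
  by rewrite !eqxx mul1r addr0.
by rewrite (negbTE nlk) andbF mul0r.
Qed.

Lemma bracketE x y k :
  bracket x y 0 k = \sum_(p < 6) \sum_(q < 6) x 0 p * y 0 q * c p q k.
Proof.
rewrite /bracket summxE; apply: eq_bigr => p _; rewrite summxE.
by apply: eq_bigr => q _; rewrite mxE.
Qed.

Lemma c_jacobi p q i l :
  \sum_(m < 6) c p q m * c m i l
  = \sum_(j < 6) (c q i j * c p j l - c p i j * c q j l).
Proof.
rewrite sumrB; under eq_bigr do rewrite !cE.
under [X in _ = X - _]eq_bigr do rewrite !cE.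
under [X in _ = _ - X]eq_bigr do rewrite !cE.
rewrite -!osum_mulE /osum.
elim/ord6_ind: p; elim/ord6_ind: q; elim/ord6_ind: i; elim/ord6_ind: l.
all: rewrite /=; first [reflexivity | ring].
Qed.

(* Row-vector convention: [x, v] = v *m ad x, hence the order in [ad_bracket]. *)
Definition ad (x : g) : 'M[R]_6 := \matrix_(i, k) adm x i k.

Lemma act2_ad x t : act2 x t = (ad x)^T *m t + t *m ad x.
Proof.
by apply/matrixP => a b; rewrite !mxE; congr (_ + _); apply: eq_bigr => i _; rewrite !mxE.
Qed.

Lemma ad_bracket x y : ad (bracket x y) = ad y *m ad x - ad x *m ad y.
Proof.
apply/matrixP => i l; rewrite !mxE /adm.
transitivity (\sum_(p < 6) \sum_(q < 6) x 0 p * y 0 q * \sum_(m < 6) c p q m * c m i l).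
  under eq_bigr => m _ do rewrite bracketE mulr_suml.
  rewrite exchange_big; apply: eq_bigr => p _.
  under eq_bigr => m _ do rewrite mulr_suml.
  rewrite exchange_big; apply: eq_bigr => q _.
  by rewrite mulr_sumr; apply: eq_bigr => m _; rewrite mulrA.
under eq_bigr => p _ do under eq_bigr => q _ do rewrite c_jacobi.
rewrite !big_ord6 !mxE /adm !big_ord6.
ring.
Qed.

Lemma act2_bracket x y t :
  act2 (bracket x y) t = act2 x (act2 y t) - act2 y (act2 x t).
Proof.
rewrite !act2_ad ad_bracket linearB /= !trmx_mul.
rewrite !mulmxDl !mulmxDr ?mulmxBl ?mulmxBr mulNmx mulmxN !mulmxA.
by apply/matrixP => a b; rewrite !mxE; ring.
Qed.

Lemma ad_is_linear : linear ad.
Proof.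
move=> a x y; apply/matrixP => i k; rewrite !mxE /adm mulr_sumr -big_split /=.
by apply: eq_bigr => m _; rewrite !mxE; ring.
Qed.

HB.instance Definition _ := GRing.isLinear.Build R g 'M[R]_6 _ ad ad_is_linear.

Definition coboundary (r : gg) (x : g) : gg := act2 x r.

Lemma coboundary_is_linear r : linear (coboundary r).
Proof.
move=> a x y; rewrite /coboundary !act2_ad linearP /= linearD /= linearZ /=.
by rewrite mulmxDl mulmxDr -scalemxAl -scalemxAr addrACA -scalerDr.
Qed.

HB.instance Definition _ r :=
  GRing.isLinear.Build R g gg _ (coboundary r) (coboundary_is_linear r).

Lemma coboundary_cocycle r : cocycle (coboundary r).
Proof. by move=> x y; rewrite /coboundary act2_bracket. Qed.

Lemma adm_e k i l : adm (e k) i l = c k i l.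
Proof. exact: e_sum_mul. Qed.

Lemma act2_e k t a b :
  act2 (e k) t a b = \sum_(l < 6) c k l a * t l b + \sum_(l < 6) t a l * c k l b.
Proof. by rewrite mxE; congr (_ + _); apply: eq_bigr => l _; rewrite adm_e. Qed.

Lemma act2B x t1 t2 : act2 x (t1 - t2) = act2 x t1 - act2 x t2.
Proof. by rewrite !act2_ad mulmxBl mulmxBr addrACA opprD. Qed.

Lemma cocycleB (delta1 delta2 : g -> gg) :
  cocycle delta1 -> cocycle delta2 -> cocycle (fun x => delta1 x - delta2 x).
Proof.
move=> H1 H2 x y; rewrite (H1 x y) (H2 x y) !act2B.
move: (act2 x (delta1 y)) (act2 y (delta1 x)) (act2 x (delta2 y)) (act2 y (delta2 x)).
by move=> A B C D; rewrite !opprB addrACA [RHS]addrACA [- C + _]addrC.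
Qed.

Lemma bracket_e i j k : bracket (e i) (e j) 0 k = c i j k.
Proof.
rewrite bracketE; under eq_bigr => p _ do under eq_bigr => q _ do rewrite -mulrA.
by under eq_bigr => p _ do rewrite -mulr_sumr e_sum_mul; rewrite e_sum_mul.
Qed.

Lemma cocycle_entry (delta : {linear g -> gg}) : cocycle delta -> forall i j a b,
  \sum_(k < 6) c i j k * delta (e k) a b
  = act2 (e i) (delta (e j)) a b - act2 (e j) (delta (e i)) a b.
Proof.
move=> Hdelta i j a b; have := Hdelta (e i) (e j).
rewrite [bracket _ _]row_sum_delta linear_sum.
set T1 := act2 _ _; set T2 := act2 _ _ => /matrixP/(_ a b); rewrite !mxE => <-.
by rewrite summxE; apply: eq_bigr => k _; rewrite linearZ bracket_e mxE.
Qed.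

Definition wt (i : 'I_6) : R :=
  match nat_of_ord i with 1 => 1 | 2 => -1 | 3 => 2%:R | 4 => -2%:R | _ => 0 end.

Lemma bracket_N j : bracket (e iN) (e j) = wt j *: e j.
Proof.
apply/rowP => k; rewrite bracket_e !mxE cE.
by elim/ord6_ind: j; elim/ord6_ind: k; rewrite /wt /=; ring.
Qed.

Lemma act2_N t : act2 (e iN) t = \matrix_(a, b) ((wt a + wt b) * t a b).
Proof.
apply/matrixP => a b; rewrite act2_e mxE !big_ord6 !cE.
by elim/ord6_ind: a; elim/ord6_ind: b; rewrite /wt /=; ring.
Qed.

Lemma cocycle_weight (delta : {linear g -> gg}) : cocycle delta -> forall j a b,
  (wt j - wt a - wt b) * delta (e j) a b = - act2 (e j) (delta (e iN)) a b.
Proof.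
move=> Hdelta j a b; have := Hdelta (e iN) (e j).
rewrite bracket_N linearZ act2_N; set T := act2 _ _ => /matrixP/(_ a b).
by rewrite !mxE; lra.
Qed.

Lemma act2_skew x t : t^T = - t -> (act2 x t)^T = - act2 x t.
Proof.
move=> tT; rewrite act2_ad linearD /= !trmx_mul trmxK tT.
by rewrite mulNmx mulmxN opprD addrC.
Qed.


Lemma sum3_cyclic_eq0 n (f h k : 'I_n -> R) (W : 'I_n -> 'I_n -> 'I_n -> R) :
  (forall p q l, W p q l + W q l p + W l p q = 0) ->
  \sum_p \sum_q \sum_l f p * h q * k l * W p q l
  + \sum_p \sum_q \sum_l h p * k q * f l * W p q l
  + \sum_p \sum_q \sum_l k p * f q * h l * W p q l = 0.
Proof.
move=> W_cyclic.
have -> : \sum_p \sum_q \sum_l h p * k q * f l * W p q l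
        = \sum_p \sum_q \sum_l f p * h q * k l * W q l p.
  under eq_bigr do rewrite exchange_big.
  rewrite exchange_big; do 3!(apply: eq_bigr => ? _); ring.
have -> : \sum_p \sum_q \sum_l k p * f q * h l * W p q l
        = \sum_p \sum_q \sum_l f p * h q * k l * W l p q.
  rewrite exchange_big; apply: eq_bigr => q _; rewrite exchange_big.
  by do 2!(apply: eq_bigr => ? _); ring.
rewrite -!big_split /=; apply: big1 => p _; rewrite -!big_split /=; apply: big1 => q _.
by rewrite -!big_split /=; apply: big1 => l _; rewrite -!mulrDr W_cyclic mulr0.
Qed.

Lemma dualbr_e (delta : g -> gg) a b k : dualbr delta (e a) (e b) 0 k = delta (e k) a b.
Proof.
rewrite mxE; under eq_bigr do under eq_bigr do rewrite -mulrA.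
by under eq_bigr do rewrite -mulr_sumr e_sum_mul; rewrite e_sum_mul.
Qed.

Lemma dualbr_antisym (delta : g -> gg) :
  (forall k, (delta (e k))^T = - delta (e k)) ->
  forall f h, dualbr delta f h = - dualbr delta h f.
Proof.
move=> delta_skew f h; apply/rowP => i; rewrite !mxE exchange_big -sumrN.
apply: eq_bigr => j _; rewrite -sumrN; apply: eq_bigr => k _.
by have /matrixP/(_ j k) := delta_skew i; rewrite !mxE => ->; ring.
Qed.

Lemma dualbr_antisym_skew (delta : g -> gg) :
  (forall f h, dualbr delta f h = - dualbr delta h f) ->
  forall k, (delta (e k))^T = - delta (e k).
Proof.
move=> anti k; apply/matrixP => a b; rewrite !mxE -!dualbr_e.
by rewrite anti mxE ?opprK.
Qed.

Lemma dualbr_dualbrE (delta : g -> gg) u v w i :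
  dualbr delta (dualbr delta u v) w 0 i =
  \sum_p \sum_q \sum_l u 0 p * v 0 q * w 0 l *
    \sum_(j < 6) delta (e j) p q * delta (e i) j l.
Proof.
rewrite mxE.
transitivity (\sum_j \sum_l \sum_p \sum_q
  u 0 p * v 0 q * w 0 l * (delta (e j) p q * delta (e i) j l)).
  apply: eq_bigr => j _; apply: eq_bigr => l _.
  rewrite mxE -mulrA mulr_suml; apply: eq_bigr => p _.
  by rewrite mulr_suml; apply: eq_bigr => q _; ring.
transitivity (\sum_j \sum_p \sum_q \sum_l
  u 0 p * v 0 q * w 0 l * (delta (e j) p q * delta (e i) j l)).
  apply: eq_bigr => j _; rewrite exchange_big; apply: eq_bigr => p _.
  by rewrite exchange_big.
rewrite exchange_big; apply: eq_bigr => p _; rewrite exchange_big; apply: eq_bigr => q _.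
by rewrite exchange_big; apply: eq_bigr => l _; rewrite mulr_sumr.
Qed.

Lemma dualbr_jacobi (delta : g -> gg) :
  (forall i p q l,
     \sum_(j < 6) delta (e j) p q * delta (e i) j l
   + \sum_(j < 6) delta (e j) q l * delta (e i) j p
   + \sum_(j < 6) delta (e j) l p * delta (e i) j q = 0) ->
  forall f h k, dualbr delta (dualbr delta f h) k + dualbr delta (dualbr delta h k) f
                + dualbr delta (dualbr delta k f) h = 0.
Proof.
move=> J f h k; apply/rowP => i.
have rowD (u v : g) : (u + v) 0 i = u 0 i + v 0 i by rewrite mxE.
rewrite !rowD !dualbr_dualbrE mxE.
exact: (sum3_cyclic_eq0 (fun p => f 0 p) (fun q => h 0 q) (fun l => k 0 l)).
Qed.

Lemma dualbr_dualbr_e (delta : g -> gg) a b d i :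
  dualbr delta (dualbr delta (e a) (e b)) (e d) 0 i
  = \sum_(j < 6) delta (e j) a b * delta (e i) j d.
Proof.
rewrite mxE; apply: eq_bigr => j _; rewrite dualbr_e.
by under eq_bigr do rewrite -mulrA; rewrite -mulr_sumr e_sum_mul.
Qed.

Section Rigidity.
Variable D : {linear g -> gg}.
Hypothesis D_cocycle : cocycle D.
Hypothesis D_skew : forall k, (D (e k))^T = - D (e k).
Hypothesis D_Ap : D (e iAp) = 0.
Hypothesis D_N_NAp : D (e iN) iN iAp = 0.
Hypothesis D_N_ApM : D (e iN) iAp iM = 0.
Hypothesis D_N_BpM : D (e iN) iBp iM = 0.
Hypothesis D_N_ApBp : D (e iN) iAp iBp = 0.
Hypothesis D_N_AmM : D (e iN) iAm iM = 0.
Hypothesis D_Am_AmM : D (e iAm) iAm iM = 0.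

Lemma D_skew_entry k a b : D (e k) a b = - D (e k) b a.
Proof. by have /matrixP/(_ b a) := D_skew k; rewrite !mxE. Qed.

Lemma D_diag k a : D (e k) a a = 0.
Proof. by have := D_skew_entry k a a; lra. Qed.

Ltac expand_act2 := rewrite ?act2_e !big_ord6 !cE ?D_diag /=.

Ltac expand_Dw Dw := rewrite !act2_e !big_ord6 !cE !Dw /=.

Ltac zero_entry := first
  [ exact: D_diag | assumption
  | rewrite D_skew_entry; match goal with H : _ = 0 |- _ => by rewrite H oppr0 end ].

Lemma D_N_eq0 : D (e iN) = 0.
Proof.
have HAp a b : act2 (e iAp) (D (e iN)) a b = 0.
  by have := cocycle_weight D_cocycle iAp a b; rewrite D_Ap mxE mulr0; lra.
have HBp : act2 (e iBp) (D (e iN)) iBp iM = 0.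
  by have := cocycle_weight D_cocycle iBp iBp iM; rewrite /wt /=; lra.
have NBm : D (e iN) iN iBm = 0 by have := HAp iN iAm; expand_act2; lra.
have NAm : D (e iN) iN iAm = 0 by have := HAp iN iM; expand_act2; lra.
have ApBm : D (e iN) iAp iBm = 0 by have := HAp iAp iAm; expand_act2; lra.
have NBp : D (e iN) iN iBp = 0 by have := HAp iAp iBp; expand_act2; lra.
have BmBp : D (e iN) iBm iBp = 0 by have := HAp iAm iBp; expand_act2; lra.
have BmM : D (e iN) iBm iM = 0 by have := HAp iAm iM; expand_act2; lra.
have BpAm : D (e iN) iBp iAm = 0 by have := HAp iBp iM; expand_act2; lra.
have BmAm : D (e iN) iBm iAm = 0 by have := HAp iBm iM; expand_act2; lra.
have NM : D (e iN) iN iM = 0.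
  by have := D_skew_entry iN iBp iBm; move: HBp; expand_act2; lra.
have ApAm : D (e iN) iAp iAm = 0 by have := HAp iAp iM; expand_act2; lra.
apply/matrixP => a b; rewrite mxE.
by elim/ord6_ind: a; elim/ord6_ind: b; zero_entry.
Qed.

Lemma D_weight j a b : wt j - wt a - wt b != 0 -> D (e j) a b = 0.
Proof.
move=> wt_nz; have := cocycle_weight D_cocycle j a b.
rewrite D_N_eq0 act2_ad mulmx0 mul0mx addr0 mxE oppr0 => /eqP.
by rewrite mulf_eq0 (negbTE wt_nz) => /eqP.
Qed.

(* The coefficients of D(X_j) allowed by skewness, the weight condition
   wt j = wt a + wt b and the normalisation D(A-)_(A-,M) = 0. *)
Definition wtab (u1 u2 u3 u4 u5 u6 u7 u8 u9 : R) (j a b : nat) : R :=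
  match j, a, b with
  | 2, 0, 2 => u1 | 2, 2, 0 => - u1 | 2, 1, 4 => u2 | 2, 4, 1 => - u2
  | 3, 0, 3 => u3 | 3, 3, 0 => - u3 | 3, 3, 5 => u4 | 3, 5, 3 => - u4
  | 4, 0, 4 => u5 | 4, 4, 0 => - u5 | 4, 4, 5 => u6 | 4, 5, 4 => - u6
  | 5, 0, 5 => u7 | 5, 5, 0 => - u7 | 5, 1, 2 => u8 | 5, 2, 1 => - u8
  | 5, 3, 4 => u9 | 5, 4, 3 => - u9
  | _, _, _ => 0
  end.

Lemma D_weight_form : exists u1 u2 u3 u4 u5 u6 u7 u8 u9,
  forall j a b, D (e j) a b = wtab u1 u2 u3 u4 u5 u6 u7 u8 u9 j a b.
Proof.
exists (D (e iAm) iN iAm), (D (e iAm) iAp iBm), (D (e iBp) iN iBp),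
  (D (e iBp) iBp iM), (D (e iBm) iN iBm), (D (e iBm) iBm iM),
  (D (e iM) iN iM), (D (e iM) iAp iAm), (D (e iM) iBp iBm).
move=> j a b; elim/ord6_ind: j; elim/ord6_ind: a; elim/ord6_ind: b; rewrite /wtab /=.
all: first
  [ reflexivity | exact: D_skew_entry | by rewrite D_N_eq0 mxE
  | by rewrite D_Ap mxE | zero_entry
  | by apply: D_weight; rewrite /wt /=; apply/eqP => w0; lra ].
Qed.

Lemma D_eq0 x : D x = 0.
Proof.
have [u1 [u2 [u3 [u4 [u5 [u6 [u7 [u8 [u9 Dw]]]]]]]]] := D_weight_form.
have E i j a b := cocycle_entry D_cocycle i j a b.
have u9_0 : u9 = 0 by move: (E iAp iAm iBp iBm); expand_Dw Dw; lra.
have u3_0 : u3 = 0 by move: (E iAp iBp iAp iBp); expand_Dw Dw; lra.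
have u6_0 : u6 = 0 by move: (E iAp iBm iAm iM); expand_Dw Dw; lra.
have u1_0 : u1 = 0 by move: (E iAm iBp iAm iBp); expand_Dw Dw; lra.
have u7_0 : u7 = 0 by move: (E iAp iAm iN iM); expand_Dw Dw; lra.
have u5_0 : u5 = 0 by move: (E iAp iBm iN iAm); expand_Dw Dw; lra.
have u2_0 : u2 = 0 by move: (E iAp iBm iAp iBm); expand_Dw Dw; lra.
have u8_0 : u8 = 0 by move: (E iAp iAm iAp iAm); expand_Dw Dw; lra.
have u4_0 : u4 = 0 by move: (E iAm iBp iAp iM); expand_Dw Dw; lra.
subst; suff De j : D (e j) = 0.
  by rewrite (row_sum_delta x) linear_sum big1 // => j _; rewrite linearZZ De scaler0.
apply/matrixP => a b; rewrite Dw mxE.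
by elim/ord6_ind: j; elim/ord6_ind: a; elim/ord6_ind: b; rewrite /= ?oppr0.
Qed.

End Rigidity.

Definition stab (P Q : R) (a b d : nat) : option R :=
  match a, b, d with
  | 1, 2, 5 => Some P | 2, 5, 1 => Some P | 5, 1, 2 => Some P
  | 1, 5, 2 => Some (- P) | 2, 1, 5 => Some (- P) | 5, 2, 1 => Some (- P)
  | 1, 5, 3 => Some (2%:R * Q) | 3, 1, 5 => Some (2%:R * Q) | 5, 3, 1 => Some (2%:R * Q)
  | 1, 3, 5 => Some (- (2%:R * Q)) | 3, 5, 1 => Some (- (2%:R * Q))
  | 5, 1, 3 => Some (- (2%:R * Q))
  | _, _, _ => None
  end.

Lemma stab_invariant P x a b d : act3 x (fun a b d => oval (stab P 0 a b d)) a b d = 0.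
Proof.
rewrite /act3 /adm.
under eq_bigr do rewrite mulr_suml.
under [X in _ + X + _]eq_bigr do rewrite mulr_suml.
under [X in _ + X]eq_bigr do rewrite mulr_suml.
under eq_bigr do under eq_bigr do rewrite cE -[x 0 _]/(oval (Some _)).
under [X in _ + X + _]eq_bigr do under eq_bigr do rewrite cE -[x 0 _]/(oval (Some _)).
under [X in _ + X]eq_bigr do under eq_bigr do rewrite cE -[x 0 _]/(oval (Some _)).
rewrite -!osum2E -!oaddE /osum.
by elim/ord6_ind: a; elim/ord6_ind: b; elim/ord6_ind: d; rewrite /=; ring.
Qed.

Section Coboundary.
Variables a1 a3 a4 a5 b3 c1 : R.
Local Notation r := (rmat a1 a3 a4 a5 b3 c1).

Definition rtab (i j : nat) : option R :=
  match i, j with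
  | 0, 1 => Some a1 | 1, 0 => Some (- a1)
  | 0, 5 => Some c1 | 5, 0 => Some (- c1)
  | 1, 2 => Some (- c1) | 2, 1 => Some c1
  | 1, 3 => Some a5 | 3, 1 => Some (- a5)
  | 1, 5 => Some a3 | 5, 1 => Some (- a3)
  | 2, 5 => Some b3 | 5, 2 => Some (- b3)
  | 3, 5 => Some a4 | 5, 3 => Some (- a4)
  | _, _ => None
  end.

Lemma rmatE i j : r i j = oval (rtab i j).
Proof.
rewrite /rmat /wedge !mxE !big_ord1 !mxE.
by elim/ord6_ind: i; elim/ord6_ind: j; rewrite /=; ring.
Qed.

Lemma rmat_skew : r^T = - r.
Proof.
apply/matrixP => i j; rewrite [LHS]mxE [RHS]mxE !rmatE.
by elim/ord6_ind: i; elim/ord6_ind: j; rewrite /=; ring.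
Qed.

Definition dtab (k i j : nat) : option R :=
  match k, i, j with
  | 0, 0, 1 => Some a1
  | 0, 1, 0 => Some (- a1)
  | 0, 1, 3 => Some (3%:R * a5)
  | 0, 1, 5 => Some a3
  | 0, 2, 5 => Some (- b3)
  | 0, 3, 1 => Some (- (3%:R * a5))
  | 0, 3, 5 => Some (2%:R * a4)
  | 0, 5, 1 => Some (- a3)
  | 0, 5, 2 => Some b3
  | 0, 5, 3 => Some (- (2%:R * a4))
  | 2, 0, 5 => Some a1
  | 2, 1, 2 => Some (- a1)
  | 2, 1, 5 => Some (2%:R * a4)
  | 2, 2, 1 => Some a1
  | 2, 2, 5 => Some (2%:R * c1)
  | 2, 3, 5 => Some (- a5)
  | 2, 5, 0 => Some (- a1)
  | 2, 5, 1 => Some (- (2%:R * a4))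
  | 2, 5, 2 => Some (- (2%:R * c1))
  | 2, 5, 3 => Some a5
  | 3, 1, 3 => Some (2%:R * a1)
  | 3, 1, 5 => Some (- (2%:R * b3))
  | 3, 3, 1 => Some (- (2%:R * a1))
  | 3, 3, 5 => Some (- (2%:R * c1))
  | 3, 5, 1 => Some (2%:R * b3)
  | 3, 5, 3 => Some (2%:R * c1)
  | 4, 0, 1 => Some (- (4%:R * a5))
  | 4, 0, 2 => Some (2%:R * a1)
  | 4, 0, 5 => Some (4%:R * a4)
  | 4, 1, 0 => Some (4%:R * a5)
  | 4, 1, 4 => Some (- (2%:R * a1))
  | 4, 1, 5 => Some (2%:R * a5)
  | 4, 2, 0 => Some (- (2%:R * a1))
  | 4, 2, 3 => Some (2%:R * a5)
  | 4, 2, 5 => Some (2%:R * a3)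
  | 4, 3, 2 => Some (- (2%:R * a5))
  | 4, 4, 1 => Some (2%:R * a1)
  | 4, 4, 5 => Some (2%:R * c1)
  | 4, 5, 0 => Some (- (4%:R * a4))
  | 4, 5, 1 => Some (- (2%:R * a5))
  | 4, 5, 2 => Some (- (2%:R * a3))
  | 4, 5, 4 => Some (- (2%:R * c1))
  | _, _, _ => None
  end.

Lemma coboundary_rmatE k a b : act2 (e k) r a b = oval (dtab k a b).
Proof.
rewrite act2_e !big_ord6 !cE !rmatE.
by elim/ord6_ind: k; elim/ord6_ind: a; elim/ord6_ind: b; rewrite /=; ring.
Qed.

Lemma coboundary_rmat_dual_jacobi : a1 * a4 + a5 * c1 = 0 -> forall i p q l,
  \sum_(j < 6) act2 (e j) r p q * act2 (e i) r j l
  + \sum_(j < 6) act2 (e j) r q l * act2 (e i) r j p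
  + \sum_(j < 6) act2 (e j) r l p * act2 (e i) r j q = 0.
Proof.
move=> Q0 i p q l.
under eq_bigr do rewrite !coboundary_rmatE.
under [X in _ + X + _]eq_bigr do rewrite !coboundary_rmatE.
under [X in _ + X]eq_bigr do rewrite !coboundary_rmatE.
rewrite -!osum_mulE -!oaddE /osum.
elim/ord6_ind: i; elim/ord6_ind: p; elim/ord6_ind: q; elim/ord6_ind: l.
all: rewrite /=; first [reflexivity | lra].
Qed.

Lemma schouten_rmatE a b d :
  schouten r a b d = oval (stab (a1 * b3 - c1 ^+ 2) (a1 * a4 + a5 * c1) a b d).
Proof.
rewrite /schouten.
under eq_bigr do under eq_bigr do rewrite !rmatE cE.
under [X in _ + X + _]eq_bigr do under eq_bigr do rewrite !rmatE cE.
under [X in _ + X]eq_bigr do under eq_bigr do rewrite !rmatE cE.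
rewrite -!osum2E -!oaddE /osum.
by elim/ord6_ind: a; elim/ord6_ind: b; elim/ord6_ind: d; rewrite /=; ring.
Qed.

End Coboundary.

Lemma skew_cocycle_eq_coboundary (delta : {linear g -> gg}) r :
  cocycle delta -> (forall k, (delta (e k))^T = - delta (e k)) -> r^T = - r ->
  delta (e iAp) = act2 (e iAp) r ->
  delta (e iN) iN iAp = act2 (e iN) r iN iAp ->
  delta (e iN) iAp iM = act2 (e iN) r iAp iM ->
  delta (e iN) iBp iM = act2 (e iN) r iBp iM ->
  delta (e iN) iAp iBp = act2 (e iN) r iAp iBp ->
  delta (e iN) iAm iM = act2 (e iN) r iAm iM ->
  delta (e iAm) iAm iM = act2 (e iAm) r iAm iM ->
  forall x, delta x = act2 x r.
Proof.
move=> delta_cocycle delta_skew r_skew Ap NNAp NApM NBpM NApBp NAmM AmAmM x.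
have subE (A B : gg) a b : (A - B) a b = A a b - B a b by rewrite !mxE.
apply/eqP; rewrite -subr_eq0; apply/eqP.
apply: (D_eq0 (D := delta \- coboundary r)).
- exact: cocycleB delta_cocycle (coboundary_cocycle r).
- by move=> k; rewrite /= linearB /= delta_skew act2_skew // opprK opprB addrC.
- by rewrite /= Ap subrr.
all: by rewrite /= subE ?NNAp ?NApM ?NBpM ?NApBp ?NAmM ?AmAmM subrr.
Qed.

Lemma lie_bialgebra_coboundary (delta : {linear g -> gg}) :
  lie_bialgebra delta -> delta (e iAp) = 0 ->
  exists a1 a3 a4 a5 b3 c1 : R, a1 * a4 + a5 * c1 = 0 /\
    forall x, delta x = act2 x (rmat a1 a3 a4 a5 b3 c1).
Proof.
move=> [delta_cocycle [anti jac]] delta_Ap.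
set a1 := delta (e iN) iN iAp; set a3 := delta (e iN) iAp iM.
set a4 := delta (e iN) iBp iM / 2%:R; set a5 := delta (e iN) iAp iBp / 3%:R.
set b3 := - delta (e iN) iAm iM; set c1 := delta (e iAm) iAm iM / 2%:R.
have delta_r : forall x, delta x = act2 x (rmat a1 a3 a4 a5 b3 c1).
{ apply: skew_cocycle_eq_coboundary; rewrite ?coboundary_rmatE /= /b3 ?opprK //.
  - exact: dualbr_antisym_skew.
  - exact: rmat_skew.
  - apply/matrixP => a b; rewrite coboundary_rmatE delta_Ap mxE.
    by elim/ord6_ind: a; elim/ord6_ind: b.
  all: by rewrite /a4 /a5 /c1; field. }
exists a1, a3, a4, a5, b3, c1; split => //.
have /rowP/(_ iBm) := jac (e iN) (e iAp) (e iM).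
have rowD (u v : g) i : (u + v) 0 i = u 0 i + v 0 i by rewrite mxE.
rewrite !rowD !dualbr_dualbr_e mxE !big_ord6 !delta_r !coboundary_rmatE /=.
lra.
Qed.

Lemma coboundary_lie_bialgebra (delta : {linear g -> gg}) (a1 a3 a4 a5 b3 c1 : R) :
  a1 * a4 + a5 * c1 = 0 -> (forall x, delta x = act2 x (rmat a1 a3 a4 a5 b3 c1)) ->
  lie_bialgebra delta /\ delta (e iAp) = 0.
Proof.
move=> Q0 delta_r; split; last first.
  apply/matrixP => a b; rewrite delta_r coboundary_rmatE mxE.
  by elim/ord6_ind: a; elim/ord6_ind: b.
split; first by move=> x y; rewrite !delta_r act2_bracket.
split; first by apply: dualbr_antisym => k; rewrite delta_r act2_skew ?rmat_skew.
apply: dualbr_jacobi => i p q l.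
under eq_bigr do rewrite !delta_r.
under [X in _ + X + _]eq_bigr do rewrite !delta_r.
under [X in _ + X]eq_bigr do rewrite !delta_r.
exact: coboundary_rmat_dual_jacobi.
Qed.

Lemma rmat_cybe_standard (a1 a3 a4 a5 b3 c1 : R) : a1 * a4 + a5 * c1 = 0 ->
  (cybe (rmat a1 a3 a4 a5 b3 c1) <-> a1 * b3 - c1 ^+ 2 = 0) /\
  (a1 * b3 - c1 ^+ 2 != 0 -> standard (rmat a1 a3 a4 a5 b3 c1)).
Proof.
move=> Q0; have S := schouten_rmatE a1 a3 a4 a5 b3 c1; rewrite Q0 in S.
have cybeP : cybe (rmat a1 a3 a4 a5 b3 c1) <-> a1 * b3 - c1 ^+ 2 = 0.
  split; first by move=> r_cybe; have := r_cybe iAp iAm iM; rewrite S.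
  rewrite /cybe => P0 a b d; rewrite S P0.
  by elim/ord6_ind: a; elim/ord6_ind: b; elim/ord6_ind: d; rewrite /= ?mulr0 ?oppr0.
split=> // P0; split; first by move/cybeP/eqP; apply/negP.
move=> x a b d; rewrite -(stab_invariant (a1 * b3 - c1 ^+ 2) x a b d).
by rewrite /act3 !big_ord6 !S.
Qed.

End TwoPhoton.

Theorem mainTheorem2 (R : realFieldType) :
  (forall delta : {linear g R -> gg R},
     (lie_bialgebra delta /\ delta (Ap R) = 0) <->
     (exists a1 a3 a4 a5 b3 c1 : R,
        a1 * a4 + a5 * c1 = 0 /\
        forall X : g R, delta X = act2 X (rmat a1 a3 a4 a5 b3 c1)))
  /\
  (forall a1 a3 a4 a5 b3 c1 : R, a1 * a4 + a5 * c1 = 0 ->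
     (cybe (rmat a1 a3 a4 a5 b3 c1) <-> a1 * b3 - c1 ^+ 2 = 0) /\
     (a1 * b3 - c1 ^+ 2 != 0 -> standard (rmat a1 a3 a4 a5 b3 c1))).
Proof.
split; last exact: rmat_cybe_standard.
move=> delta; split=> [[bialg delta_Ap] | [a1 [a3 [a4 [a5 [b3 [c1 [Q0 delta_r]]]]]]]].
  exact: lie_bialgebra_coboundary.
exact: coboundary_lie_bialgebra Q0 delta_r.
Qed.
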